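(* Consider the model $y_{it}=x_{it}'\theta^0_{k_i^0}+\varepsilon_{it}$ described in the context and suppose Assumptions 1 and 2 (stated in the context) hold. Then for $\eta>0$ small enough and for all $\delta>0$, $$\sup_{\boldsymbol\theta\in\mathcal N_\eta}\frac1N\sum_{i=1}^N1\{\widehat k_i^{(K^0)}(\boldsymbol\theta)\neq k_i^0\}=o_p(T^{-\delta})$$ as $N,T\to\infty$.
   Context: Model: $y_{it}=x_{it}'\theta^0_{k_i^0}+\varepsilon_{it}$, $i\le N$, $t\le T$, random $x_{it}\in\mathbb{R}^p$, random $\varepsilon_{it}$, nonrandom $k_i^0\in[K^0]$, $\theta^0_k\in\Theta$, $G_k^0=\{i:k_i^0=k\}$, $N_k^0=|G_k^0|$. For $\boldsymbol\theta=(\theta_1,\dots,\theta_{K^0})$, $\widehat k_i^{(K^0)}(\boldsymbol\theta)=\arg\min_{k\in[K^0]}\sum_t(y_{it}-x_{it}'\theta_k)^2$. For $\eta>0$, $\mathcal N_\eta=\{\boldsymbol\theta\in\Theta^{K^0}:\|\theta_k-\theta_k^0\|^2<\eta\ \forall k\in[K^0]\}$. Assumption 1: $K^0$ fixed; $N_k^0=\tau_kN^{\alpha_k}$, $\tau_k$ bounded away from $0,\infty$, $\alpha_k\in[0,1]$, $N_k^0\ge1$, $\sum_kN_k^0=N$, $1=\alpha_1=\dots=\alpha_m>\alpha_{m+1}\ge\dots\ge\alpha_{K^0}\ge0$ for some $m\in[K^0-1]$. Assumption 2: constants $M,c>0$ with (a) $\Theta$ compact; (b) $E\|x_{it}\|^4\le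 M$; (c) $E\varepsilon_{it}=0$, $E\varepsilon_{it}^4\le M$; (d) $(NT)^{-1/2}\sum_{i,t}x_{it}\varepsilon_{it}=O_p(1)$; (e) with $\rho_{NT}(\boldsymbol\gamma_N,k,\tilde k)$ the minimum eigenvalue of $(N_k^0)^{-1}\sum_i1\{k_i^0=k\}1\{k_i=\tilde k\}T^{-1}\sum_tx_{it}x_{it}'$, some $\widehat\rho_{NT}\xrightarrow{p}\rho>0$ satisfies $\min_{\boldsymbol\gamma_N\in[K^0]^N}\max_{\tilde k}\rho_{NT}(\boldsymbol\gamma_N,k,\tilde k)\ge\widehat\rho_{NT}$ for all $k$, large $T$; (f) $\lambda_{\min}(T^{-1}\sum_tx_{it}x_{it}')\ge\widehat c_T$ for all $i$, large $T$, $\lim\widehat c_T>c$; (g) if $\alpha_{K^0}\ge1/2$, $N/T^\nu\to0$ for some $\nu>0$; if $\alpha_{K^0}<1/2$, $N^{1-2\alpha_{K^0}}/T\to0$; (h) $\|\theta^0_k-\theta^0_{\tilde k}\|>c$ for $k\ne\tilde k$; (i) $\sup_iP(T^{-1}\sum_t\|x_{it}\|^2\ge M)=o(T^{-\delta})$ for all $\delta>0$; (j) for each $\epsilon>0$, $\sup_iP(\|T^{-1}\sum_tx_{it}\varepsilon_{it}\|\ge\epsilon)=o(T^{-\delta})$ for all $\delta>0$; (k) $(NT)^{-1}\sum_{i,t}\varepsilon^2_{it}\xrightarrow{p}\sigma^2>0$. *)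

From mathcomp Require Import all_boot all_order all_algebra.
From mathcomp Require Import all_classical all_reals all_analysis.
Import Order.TTheory GRing.Theory Num.Theory numFieldNormedType.Exports.

Set Implicit Arguments.
Unset Strict Implicit.
Unset Printing Implicit Defensive.

Local Open Scope classical_set_scope.
Local Open Scope ring_scope.

Section Defs.
Variable R : realType.

Definition inner (p : nat) (a b : 'rV[R]_p) : R := \sum_(j < p) a 0 j * b 0 j.

Definition sqnorm (p : nat) (a : 'rV[R]_p) : R := \sum_(j < p) (a 0 j) ^+ 2.

Definition enorm (p : nat) (a : 'rV[R]_p) : R := Num.sqrt (sqnorm a).

Definition outer (p : nat) (a : 'rV[R]_p) : 'M[R]_p := a^T *m a.

(** "lambda_min(A) >= c" : every (real) eigenvalue of the (symmetric) matrix
    A is at least c, i.e. the minimum eigenvalue of A is >= c. *)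
Definition lambda_min_ge (p : nat) (A : 'M[R]_p) (c : R) : Prop :=
  forall a : R, eigenvalue A a -> c <= a.

Definition nat_to_infty (u : nat -> nat) : Prop :=
  forall B : nat, \forall n \near \oo, (B <= u n)%N.

Variables (d : measure_display) (Omega : measurableType d)
          (P : probability Omega R).

(** Outer-probability bound: the (possibly non-measurable) set S is contained
    in a measurable event of probability at most r.  For measurable S this is
    just P S <= r. *)
Definition outer_prob_le (S : set Omega) (r : R) : Prop :=
  exists A : set Omega, [/\ measurable A, S `<=` A & (P A <= r%:E)%E].

(** Z_n = o_p(1)  (convergence in (outer) probability to 0):
    for all e, r > 0, eventually P*(|Z_n| > e) <= r. *)
Definition op1 (Z : nat -> Omega -> R) : Prop :=
  forall e r : R, 0 < e -> 0 < r ->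
    \forall n \near \oo, outer_prob_le [set w | e < `|Z n w|] r.

Definition cvg_prob (Z : nat -> Omega -> R) (z : R) : Prop :=
  op1 (fun n w => Z n w - z).

Definition Op1 (Z : nat -> Omega -> R) : Prop :=
  forall r : R, 0 < r -> exists B : R,
    \forall n \near \oo, outer_prob_le [set w | B < `|Z n w|] r.

End Defs.

Section Model.
Variable R : realType.
Variables (d : measure_display) (Omega : measurableType d).
Variables (p K : nat) (N T : nat -> nat).

Definition group_size (k0 : forall n, 'I_(N n) -> 'I_K) (n : nat) (k : 'I_K) : nat :=
  #|[set i | k0 n i == k]|.

Definition yval (theta0 : 'I_K -> 'rV[R]_p)
  (k0 : forall n, 'I_(N n) -> 'I_K)
  (x : forall n, Omega -> 'I_(N n) -> 'I_(T n) -> 'rV[R]_p)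
  (eps : forall n, Omega -> 'I_(N n) -> 'I_(T n) -> R)
  (n : nat) (w : Omega) (i : 'I_(N n)) (t : 'I_(T n)) : R :=
  inner (x n w i t) (theta0 (k0 n i)) + eps n w i t.

(** hat k_i^{(K^0)}(theta) = argmin_k sum_t (y_it - x_it' theta_k)^2
    (ties broken towards the smallest group index). *)
Definition hatk (theta0 : 'I_K -> 'rV[R]_p)
  (k0 : forall n, 'I_(N n) -> 'I_K)
  (x : forall n, Omega -> 'I_(N n) -> 'I_(T n) -> 'rV[R]_p)
  (eps : forall n, Omega -> 'I_(N n) -> 'I_(T n) -> R)
  (n : nat) (w : Omega) (theta : 'I_K -> 'rV[R]_p) (i : 'I_(N n)) : 'I_K :=
  Order.arg_min (k0 n i) xpredT
    (fun k : 'I_K => \sum_(t < T n)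
        (yval theta0 k0 x eps w i t - inner (x n w i t) (theta k)) ^+ 2).

Definition misclass_frac (theta0 : 'I_K -> 'rV[R]_p)
  (k0 : forall n, 'I_(N n) -> 'I_K)
  (x : forall n, Omega -> 'I_(N n) -> 'I_(T n) -> 'rV[R]_p)
  (eps : forall n, Omega -> 'I_(N n) -> 'I_(T n) -> R)
  (n : nat) (w : Omega) (theta : 'I_K -> 'rV[R]_p) : R :=
  (N n)%:R^-1 *
    \sum_(i < N n) (hatk theta0 k0 x eps w theta i != k0 n i)%:R.

Definition nbhd_eta (Theta : set 'rV[R]_p) (theta0 : 'I_K -> 'rV[R]_p)
  (eta : R) (theta : 'I_K -> 'rV[R]_p) : Prop :=
  (forall k, Theta (theta k)) /\ (forall k, sqnorm (theta k - theta0 k) < eta).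

(** matrix of Assumption 2(e):
    (N_k^0)^{-1} sum_i 1{k_i^0 = k} 1{gamma_i = kt} T^{-1} sum_t x_it x_it' *)
Definition rho_mat (k0 : forall n, 'I_(N n) -> 'I_K)
  (x : forall n, Omega -> 'I_(N n) -> 'I_(T n) -> 'rV[R]_p)
  (n : nat) (w : Omega) (gamma : 'I_(N n) -> 'I_K) (k kt : 'I_K) : 'M[R]_p :=
  (group_size k0 n k)%:R^-1 *:
    \sum_(i < N n | (k0 n i == k) && (gamma i == kt))
       ((T n)%:R^-1 *: \sum_(t < T n) outer (x n w i t)).

End Model.

(* Fix theta in N_eta and a unit i of true group g.  Its least-squares criterion at theta_k
   is sum_t eps_it^2 + T (2 <s_i, b> + b' G_i b) with b = theta0_g - theta_k, G_i the sample
   Gram matrix and s_i = T^-1 sum_t eps_it x_it.  If lambda_min(G_i) >= c,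
   T^-1 sum_t |x_it|^2 < M and |s_i| < c^2/8, the separation |theta0_k - theta0_l| > c makes
   k = g the unique minimiser once eta < c^3 / (8 (c + M)).  So the misclassification
   frequency is exactly 0, whatever the factor T^delta, outside 2N exceptional events, each of
   probability o(T^-nu) by Assumptions 2(i),(j); as N <= T^nu by Assumption 2(g), a union
   bound concludes. *)

From Pilot Require Import Defs.
From mathcomp Require Import all_boot all_order all_algebra.
From mathcomp Require Import all_classical all_reals all_analysis.
From mathcomp Require Import ring lra zify.
Import Order.TTheory GRing.Theory Num.Theory numFieldNormedType.Exports.
Local Open Scope classical_set_scope.
Local Open Scope ring_scope.

Set Implicit Arguments.
Unset Strict Implicit.
Unset Printing Implicit Defensive.

Section Euclidean.
Variables (R : realType) (p : nat).
Implicit Types (a b u : 'rV[R]_p) (l : R).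

Lemma innerE a b : inner a b = (a *m b^T) 0 0.
Proof. by rewrite mxE; apply: eq_bigr => j _; rewrite mxE. Qed.

Lemma innerC a b : inner a b = inner b a.
Proof. by apply: eq_bigr => j _; rewrite mulrC. Qed.

Lemma innerDl a b u : inner (a + b) u = inner a u + inner b u.
Proof. by rewrite /inner -big_split; apply: eq_bigr => j _; rewrite mxE mulrDl. Qed.

Lemma innerZl l a u : inner (l *: a) u = l * inner a u.
Proof. by rewrite /inner mulr_sumr; apply: eq_bigr => j _; rewrite mxE mulrA. Qed.

Lemma innerBl a b u : inner (a - b) u = inner a u - inner b u.
Proof. by rewrite innerDl -scaleN1r innerZl mulN1r. Qed.

Lemma innerDr a b u : inner u (a + b) = inner u a + inner u b.
Proof. by rewrite !(innerC u) innerDl. Qed.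

Lemma innerZr l a u : inner u (l *: a) = l * inner u a.
Proof. by rewrite !(innerC u) innerZl. Qed.

Lemma innerBr a b u : inner u (a - b) = inner u a - inner u b.
Proof. by rewrite !(innerC u) innerBl. Qed.

Lemma inner_suml (I : finType) (f : I -> 'rV[R]_p) u :
  inner (\sum_i f i) u = \sum_i inner (f i) u.
Proof. by rewrite innerE mulmx_suml summxE; apply: eq_bigr => i _; rewrite innerE. Qed.

Lemma sqnormE a : sqnorm a = inner a a.
Proof. by apply: eq_bigr => j _; rewrite expr2. Qed.

Lemma sqnorm_ge0 a : 0 <= sqnorm a.
Proof. by apply: sumr_ge0 => j _; rewrite sqr_ge0. Qed.

Lemma sqnormD a b : sqnorm (a + b) = sqnorm a + 2 * inner a b + sqnorm b.
Proof. by rewrite !sqnormE !innerDl !innerDr (innerC b a); ring. Qed.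

Lemma sqnormB a b : sqnorm (a - b) = sqnorm a - 2 * inner a b + sqnorm b.
Proof. by rewrite !sqnormE !innerBl !innerBr (innerC b a); ring. Qed.

Lemma sqnormZ l a : sqnorm (l *: a) = l ^+ 2 * sqnorm a.
Proof. by rewrite !sqnormE innerZl innerZr mulrA expr2. Qed.

Lemma sqnormN a : sqnorm (- a) = sqnorm a.
Proof. by rewrite -scaleN1r sqnormZ sqrrN expr1n mul1r. Qed.

Lemma sqnormD_le a b : sqnorm (a + b) <= 2 * sqnorm a + 2 * sqnorm b.
Proof. by have := sqnorm_ge0 (a - b); rewrite sqnormB sqnormD; lra. Qed.

Lemma coord_sqr_le_sqnorm a j : a 0 j ^+ 2 <= sqnorm a.
Proof. by rewrite /sqnorm (bigD1 j) //= lerDl sumr_ge0 // => k _; rewrite sqr_ge0. Qed.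

Lemma sqnorm_eq0 a : (sqnorm a == 0) = (a == 0).
Proof.
apply/eqP/eqP => [a0|->]; last by rewrite sqnormE /inner big1 // => j _; rewrite mxE mul0r.
apply/rowP => j; rewrite mxE; apply/eqP; rewrite -sqrf_eq0 eq_le sqr_ge0 andbT -a0.
exact: coord_sqr_le_sqnorm.
Qed.

Lemma enorm_ltE a l : 0 <= l -> (enorm a < l) = (sqnorm a < l ^+ 2).
Proof.
by move=> l_ge0; rewrite -[in RHS](sqr_sqrtr (sqnorm_ge0 a)) ltr_pXn2r ?nnegrE ?sqrtr_ge0.
Qed.

Lemma enorm_gtE a l : 0 <= l -> (l < enorm a) = (l ^+ 2 < sqnorm a).
Proof.
by move=> l_ge0; rewrite -[in RHS](sqr_sqrtr (sqnorm_ge0 a)) ltr_pXn2r ?nnegrE ?sqrtr_ge0.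
Qed.

Lemma inner_le_young a b l : l * (2 * inner a b) <= sqnorm a + l ^+ 2 * sqnorm b.
Proof. by have := sqnorm_ge0 (a - l *: b); rewrite sqnormB sqnormZ innerZr; lra. Qed.

Lemma cauchy_schwarz a b : inner a b ^+ 2 <= sqnorm a * sqnorm b.
Proof.
have [b0|b_neq0] := eqVneq b 0.
  have -> : inner a b = 0 by rewrite b0 /inner big1 // => j _; rewrite mxE mulr0.
  by rewrite expr0n mulr_ge0 ?sqnorm_ge0.
have b_gt0 : 0 < sqnorm b by rewrite lt0r sqnorm_eq0 b_neq0 sqnorm_ge0.
have := inner_le_young a b (inner a b / sqnorm b).
rewrite -(ler_pM2r b_gt0); set q := inner a b => h.
have -> : q ^+ 2 = q / sqnorm b * (2 * q) * sqnorm b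
                   - (q / sqnorm b) ^+ 2 * sqnorm b * sqnorm b.
  by field; rewrite gt_eqF.
rewrite mulrC; lra.
Qed.

End Euclidean.

Section QuadraticForm.
Variables (R : realType) (p : nat).
Implicit Types (A B : 'M[R]_p) (u v : 'rV[R]_p) (l : R).

Definition bform A u v : R := (u *m A *m v^T) 0 0.

Lemma bformE A u v : bform A u v = \sum_i \sum_j u 0 i * A i j * v 0 j.
Proof.
rewrite /bform mxE [RHS]exchange_big; apply: eq_bigr => j _.
rewrite [X in X * _]mxE [X in _ * X]mxE mulr_suml.
by apply: eq_bigr => i _.
Qed.

Lemma bformDl A u v w : bform A (u + v) w = bform A u w + bform A v w.
Proof. by rewrite /bform !mulmxDl mxE. Qed.

Lemma bformZl A l u w : bform A (l *: u) w = l * bform A u w.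
Proof. by rewrite /bform -!scalemxAl mxE. Qed.

Lemma bformDr A u v w : bform A w (u + v) = bform A w u + bform A w v.
Proof. by rewrite /bform linearD /= mulmxDr mxE. Qed.

Lemma bformZr A l u w : bform A w (l *: u) = l * bform A w u.
Proof. by rewrite /bform linearZ /= -scalemxAr mxE. Qed.

Lemma bformMB A B u v : bform (A - B) u v = bform A u v - bform B u v.
Proof. by rewrite /bform mulmxBr mulmxBl !mxE. Qed.

Lemma bformMZ A l u v : bform (l *: A) u v = l * bform A u v.
Proof. by rewrite /bform -scalemxAr -scalemxAl mxE. Qed.

Lemma bform_sum (I : finType) (F : I -> 'M[R]_p) u v :
  bform (\sum_i F i) u v = \sum_i bform (F i) u v.
Proof. by rewrite /bform mulmx_sumr mulmx_suml summxE. Qed.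

Lemma bform_scalar l u v : bform l%:M u v = l * inner u v.
Proof. by rewrite /bform mul_mx_scalar -scalemxAl mxE innerE. Qed.

Lemma bform_sym A u v : A^T = A -> bform A u v = bform A v u.
Proof.
move=> A_sym; rewrite /bform -[in LHS]A_sym.
have -> : u *m A^T *m v^T = (v *m A *m u^T)^T by rewrite !trmx_mul trmxK mulmxA.
by rewrite mxE.
Qed.

Lemma bform_outer (a u : 'rV[R]_p) : bform (outer a) u u = inner a u ^+ 2.
Proof.
rewrite /bform /outer !mulmxA -(mulmxA _ a) mxE big_ord1 -innerE.
by rewrite expr2 innerC !innerE.
Qed.

Lemma outer_mean_sym (I : finType) (a : I -> 'rV[R]_p) l :
  (l *: \sum_t outer (a t))^T = l *: \sum_t outer (a t).
Proof.
rewrite linearZ /= linear_sum /=; congr (_ *: _).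
by apply: eq_bigr => t _; rewrite /outer trmx_mul trmxK.
Qed.

Definition entry_abs_sum A : R := \sum_i \sum_j `|A i j|.

Lemma entry_abs_sum_ge0 A : 0 <= entry_abs_sum A.
Proof. by apply: sumr_ge0 => i _; apply: sumr_ge0. Qed.

Lemma normr_bform_le A u : `|bform A u u| <= entry_abs_sum A * sqnorm u.
Proof.
rewrite bformE mulr_suml; apply: le_trans (ler_norm_sum _ _ _) _.
apply: ler_sum => i _; rewrite mulr_suml; apply: le_trans (ler_norm_sum _ _ _) _.
apply: ler_sum => j _; rewrite !normrM mulrAC mulrC ler_wpM2l //.
have := coord_sqr_le_sqnorm u i; rewrite -(real_normK (num_real (u 0 i))) => hi.
have := coord_sqr_le_sqnorm u j; rewrite -(real_normK (num_real (u 0 j))) => hj.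
have := sqr_ge0 (`|u 0 i| - `|u 0 j|); nra.
Qed.

(* Test [B] on [v - t v B^-1]: positive semidefiniteness yields
   [B v.v >= (2 t - t^2 |B^-1|) |v|^2], which is [>= t |v|^2] for [t = 1 / (1 + |B^-1|)]. *)
Lemma psd_unitmx_coercive B :
  B^T = B -> (forall v, 0 <= bform B v v) -> B \in unitmx ->
  exists2 t, 0 < t & forall v, t * sqnorm v <= bform B v v.
Proof.
move=> B_sym B_psd B_unit; pose Bi := invmx B.
have Bi_sym : Bi^T = Bi by rewrite /Bi trmx_inv B_sym.
pose t := (entry_abs_sum Bi + 1)^-1.
have Bi_ge0 := entry_abs_sum_ge0 Bi.
have t_gt0 : 0 < t by rewrite invr_gt0; lra.
have t_Bi : t * entry_abs_sum Bi <= 1.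
  by rewrite ler_pdivrMl ?mulr1; lra.
exists t => // v; pose w := v *m Bi.
have Bvw : bform B v w = sqnorm v.
  by rewrite /bform /w trmx_mul Bi_sym !mulmxA -(mulmxA v) mulmxV // mulmx1 -innerE sqnormE.
have Bwv : bform B w v = sqnorm v by rewrite bform_sym.
have Bww : bform B w w = bform Bi v v.
  by rewrite /bform /w trmx_mul Bi_sym !mulmxA -(mulmxA v Bi B) mulVmx // mulmx1.
have := B_psd (v - t *: w).
rewrite -scaleNr bformDl !bformDr !bformZl !bformZr Bvw Bwv Bww => psd.
have q_le : bform Bi v v <= entry_abs_sum Bi * sqnorm v.
  by apply: le_trans (normr_bform_le Bi v); exact: ler_norm.
have v_ge0 := sqnorm_ge0 v.
move: psd q_le t_Bi v_ge0.
set q := bform Bi v v; set s := sqnorm v; set m := entry_abs_sum Bi.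
move=> psd q_le t_Bi s_ge0.
have tq : t * t * q <= t * t * (m * s) by rewrite ler_wpM2l // mulr_ge0 // ltW.
have tm : t * m * (t * s) <= t * s by rewrite ler_piMl // mulr_ge0 // ltW.
lra.
Qed.

(* The largest [s] with [s |u|^2 <= A u.u] exists by completeness; maximality forces
   [A - s] to be singular, so [s] is an eigenvalue. *)
Lemma eigenvalue_bform_lower_bound A : (0 < p)%N -> A^T = A ->
  exists2 s, eigenvalue A s & forall u, s * sqnorm u <= bform A u u.
Proof.
move=> p_gt0 A_sym.
pose S := [set s : R | forall u, s * sqnorm u <= bform A u u].
have S_lb : S (- entry_abs_sum A).
  by move=> u /=; have := normr_bform_le A u; rewrite mulNr ler_norml => /andP[].
have S_ub : has_ubound S.
  pose e : 'rV[R]_p := delta_mx 0 (Ordinal p_gt0).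
  have e_unit : sqnorm e = 1 by rewrite sqnormE innerE trmx_delta mul_delta_mx mxE !eqxx.
  exists (bform A e e) => s /(_ e); by rewrite e_unit mulr1.
have S_sup : S (sup S).
  move=> u; have [u0|u_neq0] := eqVneq (sqnorm u) 0.
    by have := S_lb u; rewrite u0 !mulr0.
  have u_gt0 : 0 < sqnorm u by rewrite lt0r u_neq0 sqnorm_ge0.
  rewrite -ler_pdivlMr //; apply: ge_sup; first by exists (- entry_abs_sum A).
  by move=> s Ss; rewrite ler_pdivlMr //; exact: Ss.
have singular : A - (sup S)%:M \notin unitmx.
  apply/negP => unit.
  have shifted_sym : (A - (sup S)%:M)^T = A - (sup S)%:M.
    by rewrite linearB /= tr_scalar_mx A_sym.
  have shifted_psd u : 0 <= bform (A - (sup S)%:M) u u.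
    by rewrite bformMB bform_scalar -sqnormE subr_ge0; exact: S_sup.
  have [t t_gt0 coercive] := psd_unitmx_coercive shifted_sym shifted_psd unit.
  have : S (sup S + t).
    by move=> u /=; have := coercive u; rewrite bformMB bform_scalar -sqnormE; lra.
  by move/(ub_le_sup S_ub); lra.
exists (sup S) => //.
by rewrite /eigenvalue /eigenspace kermx_eq0 row_free_unit.
Qed.

Lemma lambda_min_ge_bform A c : A^T = A -> lambda_min_ge A c ->
  forall u, c * sqnorm u <= bform A u u.
Proof.
move=> A_sym A_ge u; have [p0|p_gt0] := posnP p.
  have sum0 (F : 'I_p -> R) : \sum_i F i = 0.
    by rewrite big1 // => j; have := ltn_ord j; rewrite [X in (_ < X)%N]p0.
  by rewrite bformE /sqnorm !sum0 mulr0.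
have [s s_eig s_lb] := eigenvalue_bform_lower_bound p_gt0 A_sym.
apply: le_trans (s_lb u); rewrite ler_wpM2r ?sqnorm_ge0 //; exact: A_ge.
Qed.

End QuadraticForm.

Section LeastSquares.
Variables (R : realType) (p Tn : nat).
Variables (x : 'I_Tn -> 'rV[R]_p) (e : 'I_Tn -> R).

Definition sample_gram : 'M[R]_p := Tn%:R^-1 *: \sum_t outer (x t).
Definition sample_score : 'rV[R]_p := Tn%:R^-1 *: \sum_t (e t *: x t).

Lemma sum_sq_resid_decomp (th0 th : 'rV[R]_p) : (0 < Tn)%N ->
  \sum_t (inner (x t) th0 + e t - inner (x t) th) ^+ 2 =
  \sum_t e t ^+ 2 +
  Tn%:R * (2 * inner sample_score (th0 - th) + bform sample_gram (th0 - th) (th0 - th)).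
Proof.
move=> Tn_gt0; have Tn_neq0 : Tn%:R != 0 :> R by rewrite pnatr_eq0 -lt0n.
rewrite /sample_score /sample_gram innerZl bformMZ mulrDr !mulrA.
rewrite [Tn%:R * 2]mulrC mulfK // mulfV // mul1r.
rewrite inner_suml bform_sum mulr_sumr -!big_split /=; apply: eq_bigr => t _.
rewrite bform_outer innerZl -addrAC -innerBr (innerC (x t)); ring.
Qed.

Lemma bform_gram_le (u : 'rV[R]_p) :
  bform sample_gram u u <= (Tn%:R^-1 * \sum_t sqnorm (x t)) * sqnorm u.
Proof.
rewrite /sample_gram bformMZ bform_sum -mulrA ler_wpM2l ?invr_ge0 // mulr_suml.
by apply: ler_sum => t _; rewrite bform_outer cauchy_schwarz.
Qed.

End LeastSquares.

Section Separation.
Variables (R : realType) (p : nat).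

Lemma quadratic_criterion_lt (A : 'M[R]_p) (s a b : 'rV[R]_p) (c M eta : R) :
  0 < c -> 0 <= M -> eta * (8 * (c + M)) < c ^+ 3 ->
  c * sqnorm a <= bform A a a -> bform A b b <= M * sqnorm b ->
  sqnorm s < (c ^+ 2 / 8) ^+ 2 -> sqnorm b < eta -> c ^+ 2 / 2 - eta < sqnorm a ->
  2 * inner s b + bform A b b < 2 * inner s a + bform A a a.
Proof.
move=> c_gt0 M_ge0 eta_lt qa qb s_small b_small a_large.
have young := inner_le_young s (b - a) (c / 4).
have ba : sqnorm (b - a) <= 2 * sqnorm b + 2 * sqnorm a.
  by have := sqnormD_le b (- a); rewrite sqnormN.
rewrite innerBr in young.
move: young ba qa qb s_small b_small a_large.
set X := sqnorm a; set Y := sqnorm b; set Z := sqnorm (b - a); set S := sqnorm s.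
set Ia := inner s a; set Ib := inner s b; set Qa := bform A a a; set Qb := bform A b b.
move=> young ba qa qb s_small b_small a_large.
have Y_ge0 : 0 <= Y := sqnorm_ge0 b.
have f1 : c * (c * (c ^+ 2 / 2 - eta)) < c * (c * X) by rewrite !ltr_pM2l // mulr_gt0.
have f2 : (c + 2 * M) * Y <= (c + 2 * M) * eta.
  by rewrite ler_wpM2l ?ltW //; lra.
have f3 : c ^+ 2 / 16 * Z <= c ^+ 2 / 16 * (2 * Y + 2 * X).
  by rewrite ler_wpM2l // divr_ge0 ?sqr_ge0.
have f4 : c / 4 * Qb <= c / 4 * (M * Y) by rewrite ler_wpM2l // divr_ge0 // ltW.
have f5 : c / 4 * (c * X) <= c / 4 * Qa by rewrite ler_wpM2l // divr_ge0 // ltW.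
have f6 : c * (eta * (8 * (c + M))) < c * c ^+ 3 by rewrite ltr_pM2l.
suff : c / 4 * (2 * Ib + Qb) < c / 4 * (2 * Ia + Qa) by rewrite ltr_pM2l ?divr_gt0.
move: young f1 f2 f3 f4 f5 f6 s_small; rewrite ?exprS ?expr0 ?mulr1.
nra.
Qed.

Lemma true_group_resid_lt (Tn : nat) (x : 'I_Tn -> 'rV[R]_p) (e : 'I_Tn -> R)
    (th0g th0k thg thk : 'rV[R]_p) (c M eta : R) :
  (0 < Tn)%N -> 0 < c -> 0 <= M -> eta * (8 * (c + M)) < c ^+ 3 ->
  lambda_min_ge (sample_gram x) c -> Tn%:R^-1 * \sum_t sqnorm (x t) < M ->
  enorm (sample_score x e) < c ^+ 2 / 8 ->
  c < enorm (th0g - th0k) ->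
  sqnorm (thg - th0g) < eta -> sqnorm (thk - th0k) < eta ->
  \sum_t (inner (x t) th0g + e t - inner (x t) thg) ^+ 2 <
  \sum_t (inner (x t) th0g + e t - inner (x t) thk) ^+ 2.
Proof.
move=> Tn_gt0 c_gt0 M_ge0 eta_lt gram_ge x_small score_small sep g_close k_close.
rewrite !sum_sq_resid_decomp // ltrD2l ltr_pM2l ?ltr0n //.
apply: (quadratic_criterion_lt c_gt0 M_ge0 eta_lt).
- exact: lambda_min_ge_bform (outer_mean_sym _ _) gram_ge _.
- by apply: le_trans (bform_gram_le x _) _; rewrite ler_wpM2r ?sqnorm_ge0 ?ltW.
- by rewrite -enorm_ltE // divr_ge0 ?sqr_ge0.
- by rewrite -opprB sqnormN.
- have := sqnormD_le (th0g - thk) (thk - th0k); rewrite addrA subrK.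
  by move: sep; rewrite (enorm_gtE _ (ltW c_gt0)); lra.
Qed.

End Separation.

Section Events.
Variables (R : realType) (d : measure_display) (Omega : measurableType d).
Variable P : probability Omega R.

Lemma measurable_ler (f g : Omega -> R) :
  measurable_fun setT f -> measurable_fun setT g -> measurable [set w | f w <= g w].
Proof.
move=> mf mg.
have := measurable_realfun.measurable_fun_ler mf mg measurableT (Y := [set true]) I.
by rewrite setTI.
Qed.

Lemma measurable_sqnorm p (f : Omega -> 'rV[R]_p) :
  (forall j, measurable_fun setT (fun w => f w 0 j)) ->
  measurable_fun setT (fun w => sqnorm (f w)).
Proof.
by move=> mf; apply: measurable_sum => j; exact: measurable_realfun.measurable_funX.
Qed.

Lemma measurable_enorm p (f : Omega -> 'rV[R]_p) :
  (forall j, measurable_fun setT (fun w => f w 0 j)) ->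
  measurable_fun setT (fun w => enorm (f w)).
Proof.
move=> mf; apply: measurableT_comp (measurable_sqnorm mf).
exact: measurable_realfun.continuous_measurable_fun (@sqrt_continuous R).
Qed.

Lemma measurable_coord_scale_sum p (I : finType) (l : R) (a : I -> Omega -> R)
    (v : I -> Omega -> 'rV[R]_p) :
  (forall i, measurable_fun setT (a i)) ->
  (forall i j, measurable_fun setT (fun w => v i w 0 j)) ->
  forall j, measurable_fun setT (fun w => (l *: \sum_i (a i w *: v i w)) 0 j).
Proof.
move=> ma mv j.
have -> : (fun w => (l *: \sum_i (a i w *: v i w)) 0 j) =
          (fun w => l * \sum_i (a i w * v i w 0 j)).
  by apply/funext => w; rewrite mxE summxE; under eq_bigr do rewrite mxE.
apply: measurable_realfun.measurable_funM; first exact: measurable_cst.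
by apply: measurable_sum => i; exact: measurable_realfun.measurable_funM.
Qed.

Lemma measure_exists_le (I : finType) (F : I -> set Omega) :
  (forall i, measurable (F i)) ->
  measurable [set w | exists i, F i w] /\
  (P [set w | exists i, F i w] <= \sum_i P (F i))%E.
Proof.
move=> mF; have -> : [set w | exists i, F i w] = \big[setU/set0]_(i <- index_enum I) F i.
  rewrite -bigcup_seq; apply/seteqP; split=> [w [i Fi]|w [i _ Fi]]; last by exists i.
  by exists i => //=; rewrite mem_index_enum.
elim: (index_enum I) => [|i s [ms Ps]]; first by rewrite !big_nil measure0.
rewrite !big_cons; split; first exact: measurableU.
by apply: le_trans (measureU2 _ _ _) _ => //; exact: leeD.
Qed.

Lemma union_bound_le (I : finType) (F : I -> set Omega) (a r : R) :
  0 < a -> (forall i, measurable (F i)) -> (forall i, a%:E * P (F i) <= r%:E)%E ->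
  (P [set w | exists i, F i w] <= (#|I|%:R * r / a)%:E)%E.
Proof.
move=> a_gt0 mF PF; have [_ PU] := measure_exists_le mF; apply: le_trans PU _.
have PF_le i : (P (F i) <= (r / a)%:E)%E.
  have := PF i; case: (P (F i)) => [y| |]; last by rewrite leNye.
    by rewrite -EFinM !lee_fin ler_pdivlMr // mulrC.
  by rewrite mulry gtr0_sg // mul1e leye_eq.
apply: (@le_trans _ _ (\sum_(i : I) (r / a)%:E)%E); first by apply: lee_sum => i _.
by rewrite sumEFin lee_fin sumr_const -[_ *+ _]mulr_natl mulrA.
Qed.

End Events.

Section Rates.
Variable R : realType.

Lemma eventually_le_of_ratio_cvg0 (u v : nat -> R) :
  (\forall n \near \oo, 0 < v n) -> (fun n => u n / v n) @ \oo --> 0 ->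
  \forall n \near \oo, u n <= v n.
Proof.
move=> v_gt0 uv0; have uv_lt1 := cvgr_lt 0 uv0 1 ltr01.
near=> n; have vn_gt0 : 0 < v n by near: n; exact: v_gt0.
have : u n / v n < 1 by near: n; exact: uv_lt1.
by rewrite ltr_pdivrMr // mul1r => /ltW.
Unshelve. all: end_near.
Qed.

Lemma pow_bound_of_rate (a : R) (N T : nat -> nat) : nat_to_infty T ->
  (1 / 2 <= a -> exists nu : R, 0 < nu /\
     (fun n => (N n)%:R / (T n)%:R `^ nu) @ \oo --> 0) ->
  (a < 1 / 2 -> (fun n => (N n)%:R `^ (1 - 2 * a) / (T n)%:R) @ \oo --> 0) ->
  exists nu : R, 0 < nu /\ \forall n \near \oo, (N n)%:R <= (T n)%:R `^ nu.
Proof.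
move=> T_infty large small.
have T_gt0 : \forall n \near \oo, (0 < T n)%N by exact: T_infty 1%N.
have [a_ge|a_lt] := leP (1 / 2) a.
  have [nu [nu_gt0 N_T]] := large a_ge; exists nu; split => //.
  apply: eventually_le_of_ratio_cvg0 N_T; near=> n.
  by rewrite powR_gt0 // ltr0n; near: n; exact: T_gt0.
have b_gt0 : 0 < 1 - 2 * a by lra.
exists (1 - 2 * a)^-1; split; first by rewrite invr_gt0.
have N_T : \forall n \near \oo, (N n)%:R `^ (1 - 2 * a) <= (T n)%:R.
  apply: eventually_le_of_ratio_cvg0 (small a_lt); near=> n.
  by rewrite ltr0n; near: n; exact: T_gt0.
near=> n.
have -> : (N n)%:R = ((N n)%:R `^ (1 - 2 * a)) `^ (1 - 2 * a)^-1 :> R.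
  by rewrite -powRrM mulfV ?gt_eqF // powRr1 // ler0n.
apply: ge0_ler_powR; rewrite ?nnegrE ?invr_ge0 ?powR_ge0 ?ler0n ?(ltW b_gt0) //.
by near: n; exact: N_T.
Unshelve. all: end_near.
Qed.

Lemma pow_bound_of_last_rate (K : nat) (alpha : 'I_K -> R) (N T : nat -> nat) :
  (0 < K)%N -> nat_to_infty T ->
  (forall kK : 'I_K, kK.+1 = K ->
     (1 / 2 <= alpha kK -> exists nu : R, 0 < nu /\
        (fun n => (N n)%:R / (T n)%:R `^ nu) @ \oo --> 0) /\
     (alpha kK < 1 / 2 ->
        (fun n => (N n)%:R `^ (1 - 2 * alpha kK) / (T n)%:R) @ \oo --> 0)) ->
  exists nu : R, 0 < nu /\ \forall n \near \oo, (N n)%:R <= (T n)%:R `^ nu.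
Proof.
move=> K_gt0 T_infty rates; have last_lt : (K.-1 < K)%N by rewrite ltn_predL.
have [] := rates (Ordinal last_lt) (prednK K_gt0).
exact: pow_bound_of_rate.
Qed.

End Rates.

Section Model.
Variables (R : realType) (d : measure_display) (Omega : measurableType d).
Variable P : probability Omega R.
Variables (p K : nat) (N T : nat -> nat) (theta0 : 'I_K -> 'rV[R]_p).
(* Declared with [n] explicit, so that [k0 n i] and [x n w i t] read as in Defs. *)
Unset Implicit Arguments.
Variable k0 : forall n, 'I_(N n) -> 'I_K.
Variable x : forall n, Omega -> 'I_(N n) -> 'I_(T n) -> 'rV[R]_p.
Variable eps : forall n, Omega -> 'I_(N n) -> 'I_(T n) -> R.
Set Implicit Arguments.
Variables (c M eta : R).
Hypothesis x_meas : forall n i t j, measurable_fun setT (fun w => x n w i t 0 j).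
Hypothesis eps_meas : forall n i t, measurable_fun setT (fun w => eps n w i t).
Hypotheses (c_gt0 : 0 < c) (M_ge0 : 0 <= M) (eta_small : eta * (8 * (c + M)) < c ^+ 3).
Hypothesis separated : forall k kt : 'I_K, k != kt -> c < enorm (theta0 k - theta0 kt).

(* [(i, true)] and [(i, false)] are the exceptional events of Assumptions 2(i) and 2(j),
   the latter with threshold [c^2 / 8]. *)
Definition bad_event n (ib : 'I_(N n) * bool) : set Omega :=
  let: (i, b) := ib in
  if b then [set w | M <= (T n)%:R^-1 * \sum_(t < T n) sqnorm (x n w i t)]
  else [set w | c ^+ 2 / 8 <= enorm (sample_score (x n w i) (eps n w i))].

Lemma measurable_bad_event n (ib : 'I_(N n) * bool) : measurable (bad_event ib).
Proof.
case: ib => i [|]; apply: measurable_ler; try exact: measurable_cst.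
  apply: measurable_realfun.measurable_funM; first exact: measurable_cst.
  by apply: measurable_sum => t; exact: measurable_sqnorm.
by apply: measurable_enorm; apply: measurable_coord_scale_sum.
Qed.

Lemma hatk_eq_true_group n w (theta : 'I_K -> 'rV[R]_p) i :
  (0 < T n)%N -> lambda_min_ge (sample_gram (x n w i)) c ->
  ~ bad_event (i, true) w -> ~ bad_event (i, false) w ->
  (forall k, sqnorm (theta k - theta0 k) < eta) ->
  hatk theta0 k0 x eps w theta i = k0 n i.
Proof.
move=> T_gt0 gram_ge /negP x_small /negP score_small close; rewrite /hatk.
case: arg_minP => // k _ k_min; apply/eqP/negPn/negP => k_neq.
have := k_min (k0 n i) isT; apply/negP; rewrite -ltNge.
apply: (true_group_resid_lt (c := c) (M := M)) (close _) (close _) => //;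
  try by rewrite ltNge.
by apply: separated; rewrite eq_sym.
Qed.

Lemma misclass_event_sub_bad n (Theta : set 'rV[R]_p) (e delta : R) :
  (0 < T n)%N -> (forall w i, lambda_min_ge (sample_gram (x n w i)) c) -> 0 < e ->
  [set w | exists theta, nbhd_eta Theta theta0 eta theta /\
     e < (T n)%:R `^ delta * misclass_frac theta0 k0 x eps n w theta] `<=`
  [set w | exists ib : 'I_(N n) * bool, bad_event ib w].
Proof.
move=> T_gt0 gram_ge e_gt0 w [theta [[_ close] e_lt]]; apply: contrapT => good.
suff frac0 : misclass_frac theta0 k0 x eps n w theta = 0.
  by move: e_lt; rewrite frac0 mulr0 ltNge ltW.
rewrite /misclass_frac big1 ?mulr0 // => i _.
rewrite hatk_eq_true_group ?eqxx // => bad; apply: good; first by exists (i, true).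
by exists (i, false).
Qed.

Lemma bad_events_rare (nu r : R) : nat_to_infty T -> 0 < r ->
  (\forall n \near \oo, (N n)%:R <= (T n)%:R `^ nu) ->
  (\forall n \near \oo, forall i : 'I_(N n),
     (((T n)%:R `^ nu)%:E * P (bad_event (i, true)) <= (r / 2)%:E)%E) ->
  (\forall n \near \oo, forall i : 'I_(N n),
     (((T n)%:R `^ nu)%:E * P (bad_event (i, false)) <= (r / 2)%:E)%E) ->
  \forall n \near \oo,
    (P [set w | exists ib : 'I_(N n) * bool, bad_event ib w] <= r%:E)%E.
Proof.
move=> T_infty r_gt0 N_le_Tnu x_rare score_rare.
have rare : \forall n \near \oo, forall ib : 'I_(N n) * bool,
    (((T n)%:R `^ nu)%:E * P (bad_event ib) <= (r / 2)%:E)%E.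
  by apply: filterS2 x_rare score_rare => n xr sr [i [|]]; [exact: xr | exact: sr].
near=> n.
have Tnu_gt0 : 0 < (T n)%:R `^ nu.
  by rewrite powR_gt0 // ltr0n; near: n; exact: T_infty 1%N.
apply: le_trans (union_bound_le (r := r / 2) Tnu_gt0 (@measurable_bad_event n) _) _.
  by near: n; exact: rare.
rewrite lee_fin card_prod card_ord card_bool natrM ler_pdivrMr //.
rewrite (_ : _ * _ * (r / 2) = r * (N n)%:R); last by field.
by rewrite ler_wpM2l ?(ltW r_gt0) //; near: n; exact: N_le_Tnu.
Unshelve. all: end_near.
Qed.

End Model.

Theorem lemmaA3
  (R : realType) (d : measure_display) (Omega : measurableType d)
  (P : probability Omega R)
  (p K : nat) (N T : nat -> nat)
  (Theta : set 'rV[R]_p) (theta0 : 'I_K -> 'rV[R]_p)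
  (k0 : forall n, 'I_(N n) -> 'I_K)
  (x : forall n, Omega -> 'I_(N n) -> 'I_(T n) -> 'rV[R]_p)
  (eps : forall n, Omega -> 'I_(N n) -> 'I_(T n) -> R)
  (alpha : 'I_K -> R) (M c rho sigma2 : R)
  (rhohat : nat -> Omega -> R) (chat : nat -> R)
  (* N, T -> oo *)
  (HN : nat_to_infty N) (HT : nat_to_infty T)
  (* random regressors and errors *)
  (Hxmeas : forall n i t (j : 'I_p),
      measurable_fun setT (fun w => x n w i t 0 j))
  (Hemeas : forall n i t, measurable_fun setT (fun w => eps n w i t))
  (* Assumption 1 *)
  (Halpha01 : forall k, 0 <= alpha k <= 1)
  (Halpha_mono : forall k l : 'I_K, (k <= l)%N -> alpha l <= alpha k)
  (Halpha_m : exists m : nat, [/\ (1 <= m)%N, (m <= K - 1)%N &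
      forall k : 'I_K, ((k < m)%N -> alpha k = 1) /\ ((m <= k)%N -> alpha k < 1)])
  (HNk_pos : forall n k, (1 <= group_size k0 n k)%N)
  (Htau : exists tlo thi : R, [/\ 0 < tlo, tlo <= thi &
      forall n k, tlo * (N n)%:R `^ alpha k <= (group_size k0 n k)%:R
                  <= thi * (N n)%:R `^ alpha k])
  (* Assumption 2 *)
  (HM : 0 < M) (Hc : 0 < c)
  (Ha_compact : compact Theta) (Ha_in : forall k, Theta (theta0 k))
  (Hb : forall n i t, (\int[P]_w ((sqnorm (x n w i t)) ^+ 2)%:E <= M%:E)%E)
  (Hc_mean : forall n i t, (\int[P]_w (eps n w i t)%:E = 0)%E)
  (Hc_4 : forall n i t, (\int[P]_w ((eps n w i t) ^+ 4)%:E <= M%:E)%E)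
  (Hd : Op1 P (fun n w => enorm
      (((N n * T n)%:R `^ (- (1 / 2))) *:
         \sum_(i < N n) \sum_(t < T n) (eps n w i t *: x n w i t))))
  (He_rho : 0 < rho) (He_cvg : cvg_prob P rhohat rho)
  (He : \forall n \near \oo, forall (w : Omega) (k : 'I_K)
      (gamma : 'I_(N n) -> 'I_K), exists kt : 'I_K,
        lambda_min_ge (rho_mat k0 x w gamma k kt) (rhohat n w))
  (Hf : \forall n \near \oo, forall (w : Omega) (i : 'I_(N n)),
      lambda_min_ge ((T n)%:R^-1 *: \sum_(t < T n) outer (x n w i t)) (chat n))
  (Hf_lim : exists cbar : R, c < cbar /\ chat @ \oo --> cbar)
  (Hg : forall kK : 'I_K, (kK.+1 = K)%N ->
      (1 / 2 <= alpha kK ->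
         exists nu : R, 0 < nu /\
           (fun n => (N n)%:R / (T n)%:R `^ nu) @ \oo --> 0) /\
      (alpha kK < 1 / 2 ->
           (fun n => (N n)%:R `^ (1 - 2 * alpha kK) / (T n)%:R) @ \oo --> 0))
  (Hh : forall k kt : 'I_K, k != kt -> c < enorm (theta0 k - theta0 kt))
  (Hi : forall delta e : R, 0 < delta -> 0 < e ->
      \forall n \near \oo, forall i : 'I_(N n),
        (((T n)%:R `^ delta)%:E *
          P [set w | (M <= (T n)%:R^-1 * \sum_(t < T n) sqnorm (x n w i t))%R]
         <= e%:E)%E)
  (Hj : forall ep delta e : R, 0 < ep -> 0 < delta -> 0 < e ->
      \forall n \near \oo, forall i : 'I_(N n),
        (((T n)%:R `^ delta)%:E *
          P [set w | (ep <= enorm ((T n)%:R^-1 *: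
                               \sum_(t < T n) (eps n w i t *: x n w i t)))%R]
         <= e%:E)%E)
  (Hk_pos : 0 < sigma2)
  (Hk : cvg_prob P (fun n w => (N n * T n)%:R^-1 *
                     \sum_(i < N n) \sum_(t < T n) (eps n w i t) ^+ 2) sigma2) :
  exists eta0 : R, 0 < eta0 /\
    forall eta delta : R, 0 < eta -> eta < eta0 -> 0 < delta ->
      (* T^delta * sup_{theta in N_eta} N^{-1} sum_i 1{hat k_i(theta) <> k_i^0}
         = o_p(1); the event {sup > e} is written as {exists theta, ... > e} *)
      forall e r : R, 0 < e -> 0 < r ->
        \forall n \near \oo, outer_prob_le P
          [set w | exists theta : 'I_K -> 'rV[R]_p,
             nbhd_eta Theta theta0 eta theta /\
             e < (T n)%:R `^ delta * misclass_frac theta0 k0 x eps n w theta] r.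
Proof.
have [cbar [c_lt_cbar chat_cvg]] := Hf_lim.
have K_gt0 : (0 < K)%N by have [m [m_ge1 m_le _]] := Halpha_m; lia.
have [nu [nu_gt0 N_le_Tnu]] := pow_bound_of_last_rate K_gt0 HT Hg.
have cM_gt0 : 0 < 8 * (c + M) by rewrite mulr_gt0 ?addr_gt0.
exists (c ^+ 3 / (8 * (c + M))); split; first by rewrite divr_gt0 ?exprn_gt0.
move=> eta delta eta_gt0 eta_lt _ e r e_gt0 r_gt0.
have eta_small : eta * (8 * (c + M)) < c ^+ 3 by rewrite -ltr_pdivlMr.
have r2_gt0 : 0 < r / 2 by rewrite divr_gt0.
have ep_gt0 : 0 < c ^+ 2 / 8 by rewrite divr_gt0 ?exprn_gt0.
have rare := bad_events_rare Hxmeas Hemeas HT r_gt0 N_le_Tnu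
  (Hi nu _ nu_gt0 r2_gt0) (Hj _ nu _ ep_gt0 nu_gt0 r2_gt0).
have gram_ge : \forall n \near \oo, forall w i, lambda_min_ge (sample_gram (x n w i)) c.
  apply: filterS2 (cvgr_gt cbar chat_cvg c c_lt_cbar) Hf => n c_lt Hf_n w i z.
  by move/(Hf_n w i); apply/le_trans/ltW.
near=> n.
exists [set w | exists ib : 'I_(N n) * bool, bad_event x eps c M ib w]; split.
- by case: (measure_exists_le P (measurable_bad_event c M Hxmeas Hemeas (n := n))).
- apply: (misclass_event_sub_bad Hc (ltW HM) eta_small Hh) => //.
    by near: n; exact: HT 1%N.
  by near: n; exact: gram_ge.
- by near: n; exact: rare.
Unshelve. all: end_near.
Qed.
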